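(* Let $G$ be a map graph with a corresponding planar bipartite graph $B$, let $\mathcal{D}=(T,\beta_{\mathcal{D}})$ be a nice tree decomposition of $B$, and let $\mathcal{D}'=(T,\beta_{\mathcal{D}'})$ be derived from $\mathcal{D}$ as described in the context. Let $v\in V(G)$ and $s\in S(G)$ with $v\in N_B(s)$, and suppose $Q=\{t\in V(T): v\in\mathsf{Fake}(t)\text{ and } s\in\beta_{\mathcal{D}}(t)\}\neq\emptyset$. Let $x$ be the node of $T$ labelled forget$(v)$ in $\mathcal{D}$, and let $y$ be the unique child of the node labelled forget$(s)$ in $\mathcal{D}$. Then $y$ is an ancestor of $x$, and $Q$ induces in $T$ exactly the unique path between $x$ and $y$.
   Context: All graphs are finite and simple. For a bipartite graph $B$ with bipartition $V(B)=W\uplus U$, the half-square of $B$ is the graph on $W$ in which two vertices are adjacent iff they are at distance exactly $2$ in $B$. A graph $G$ is a map graph iff it is the half-square of some planar bipartite graph $B$; such $B$ (with $W=V(G)$) is a corresponding planar bipartite graph, and $S(G)=U$ is the set of special vertices. A tree decomposition $(T,\beta)$ of a graph: rooted tree $T$, bags $\beta(t)$, every vertex and every edge covered by some bag, and for each vertex the nodes containing it induce a connected subtree. For a node $t$, $\gamma_{\mathcal{D}}(t)$ is the union of the bags of $t$ and all its descendants. A tree decomposition is nice if the root has empty bag and each node is either a leaf with empty bag, an introduce$(w)$ node (one child $u$, $\beta(t)=\beta(u)\cup\{w\}$, $w\notin\beta(u)$), a forget$(w)$ node (one child $u$, $\beta(t)=\beta(u)\setminus\{w\}$, $w\in\beta(u)$),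 or a join node (two children with bags equal to $\beta(t)$); in a nice tree decomposition, for every vertex $w$ there is exactly one node labelled forget$(w)$. The decomposition $\mathcal{D}'$ derived from $\mathcal{D}$ has the same tree $T$ and bags $\beta_{\mathcal{D}'}(t)=(\beta_{\mathcal{D}}(t)\cap V(G))\cup\bigcup_{s\in\beta_{\mathcal{D}}(t)\cap S(G)}(N_B(s)\cap\gamma_{\mathcal{D}}(t))$. For a node $t$, $\mathsf{Fake}(t)=\beta_{\mathcal{D}'}(t)\setminus\beta_{\mathcal{D}}(t)$. *)

From mathcomp Require Import all_boot.
Set Implicit Arguments. Unset Strict Implicit. Unset Printing Implicit Defensive.

Section Graphs.
Variable V : finType.
Variable e : rel V.

Definition simple_graph : Prop := irreflexive e /\ symmetric e.

Definition nbhd (a : V) : {set V} := [set b | e a b].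

(* A graph is planar iff some rotation system satisfies Euler's formula
   V - E + F = 2 * #components, where isolated vertices are counted as
   contributing one extra face-equivalent (a component with no edge has no
   darts), i.e. V - E + F + #isolated = 2 * #components
   (written without subtraction, using #darts = 2E). *)
Definition darts : {set V * V} := [set d | e d.1 d.2].

Definition rotation_system (rho : V * V -> V * V) : Prop :=
  (forall d, d \in darts -> rho d \in darts /\ (rho d).1 = d.1) /\
  (forall d d', d \in darts -> d' \in darts -> d.1 = d'.1 -> fconnect rho d d').

Definition face_perm (rho : V * V -> V * V) (d : V * V) : V * V := rho (d.2, d.1).

Definition faces (rho : V * V -> V * V) : {set {set V * V}} :=
  [set [set d' in darts | fconnect (face_perm rho) d d'] | d in darts].

Definition components : {set {set V}} := [set [set b | connect e a b] | a : V].

Definition isolated : {set V} := [set a | ~~ [exists b, e a b]].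

Definition planar : Prop :=
  exists rho : V * V -> V * V, rotation_system rho /\
    2 * (#|V| + #|faces rho| + #|isolated|) = 4 * #|components| + #|darts|.

Definition bipartite_sides (W : {set V}) : Prop :=
  forall a b, e a b -> (a \in W) != (b \in W).

Definition half_square (W : {set V}) (eG : rel V) : Prop :=
  forall a b, eG a b =
    [&& a \in W, b \in W, a != b, ~~ e a b & [exists u, e a u && e u b]].

(* G = (W, eG) is a map graph with corresponding planar bipartite graph
   B = (V, e), bipartition V = W (+) ~: W; S(G) = ~: W *)
Definition map_graph_with (W : {set V}) (eG : rel V) : Prop :=
  [/\ simple_graph, bipartite_sides W, planar & half_square W eG].

End Graphs.

Section Trees.
Variable N : finType.
Variable root : N.
Variable par : N -> N.      (* parent function; par root = root *)

Definition rooted_tree : Prop :=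
  par root = root /\ forall t, fconnect par t root.

Definition children (t : N) : {set N} := [set c | (c != root) && (par c == t)].

Definition tadj : rel N :=
  fun a b => ((a != root) && (par a == b)) || ((b != root) && (par b == a)).

Definition anc (a d : N) : bool := fconnect par d a.

Variable V : finType.
Variable bag : N -> {set V}.

Definition gamma (t : N) : {set V} := \bigcup_(d | anc t d) bag d.

Definition tree_decomposition (e : rel V) : Prop :=
  [/\ rooted_tree,
      (forall a, exists t, a \in bag t),
      (forall a b, e a b -> exists t, (a \in bag t) && (b \in bag t)) &
      (forall a t1 t2, a \in bag t1 -> a \in bag t2 ->
         connect [rel u w | [&& tadj u w, a \in bag u & a \in bag w]] t1 t2)].

Definition is_leaf (t : N) : Prop := children t = set0 /\ bag t = set0.
Definition is_introduce (t : N) (w : V) : Prop :=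
  exists u, [/\ children t = [set u], w \notin bag u & bag t = w |: bag u].
Definition is_forget (t : N) (w : V) : Prop :=
  exists u, [/\ children t = [set u], w \in bag u & bag t = bag u :\ w].
Definition is_join (t : N) : Prop :=
  exists u1 u2, [/\ u1 != u2, children t = [set u1; u2],
                   bag u1 = bag t & bag u2 = bag t].

Definition nice_tree_decomposition (e : rel V) : Prop :=
  [/\ tree_decomposition e, bag root = set0 &
      forall t, is_leaf t \/ (exists w, is_introduce t w)
                \/ (exists w, is_forget t w) \/ is_join t].

Definition derived_bag (e : rel V) (W : {set V}) (t : N) : {set V} :=
  (bag t :&: W) :|: \bigcup_(s in bag t :&: ~: W) (nbhd e s :&: gamma t).

Definition Fake (e : rel V) (W : {set V}) (t : N) : {set V} :=
  derived_bag e W t :\: bag t.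

End Trees.

(* Let u be the child of x = forget(v).  Since v is in bag u but not in bag x,
   every bag containing v lies below u; likewise every bag containing s lies
   below y.  If v is fake at t and s is in bag t, then t is below y, and v is in
   a bag below t but not in bag t; as that bag is also below u, t and u are
   comparable, and convexity of the bags containing v rules out t below u, so t
   is an ancestor of x.  Conversely, for t between x and y, v is not in bag t
   (that would put t below u), while a bag containing the edge sv lies below
   x, hence below t: it puts v in gamma(t), and by convexity puts s in bag t. *)

From mathcomp Require Import all_boot.
Set Implicit Arguments. Unset Strict Implicit. Unset Printing Implicit Defensive.

Section Orbits.
Variables (T : finType) (f : T -> T).

Lemma fconnect_fixed u w : f u = u -> fconnect f u w -> w = u.
Proof. by move=> fu /iter_findex <-; rewrite iter_fix. Qed.

Lemma fconnect_comparable d a b :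
  fconnect f d a -> fconnect f d b -> fconnect f a b || fconnect f b a.
Proof.
move=> /iter_findex <- /iter_findex <-.
have [le_ab | /ltnW le_ba] := leqP (findex f d a) (findex f d b).
  by rewrite -(subnK le_ab) iterD fconnect_iter.
by rewrite -(subnK le_ba) iterD fconnect_iter orbT.
Qed.

End Orbits.

Section RootedTree.
Variables (N : finType) (root : N) (par : N -> N).
Hypothesis tree : rooted_tree root par.

Lemma par_fixed_root u : par u = u -> u = root.
Proof. by move=> fu; rewrite (fconnect_fixed fu (tree.2 u)). Qed.

(* A cycle of ancestors through two distinct nodes would contain the root,
   which only reaches itself. *)
Lemma anc_antisym a b : fconnect par a b -> fconnect par b a -> a = b.
Proof.
move=> ab ba; have [// | neq_ab] := eqVneq a b.
have cyc : fcycle par (orbit par a).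
  rewrite -fconnect_f; apply: connect_trans ba.
  by move: ab; rewrite fconnect_eqVf (negPf neq_ab).
have root_a : fconnect par root a.
  by rewrite (fconnect_cycle cyc) // -fconnect_orbit tree.2.
have a_root := fconnect_fixed tree.1 root_a.
by rewrite a_root (fconnect_fixed tree.1 (connect_trans root_a ab)).
Qed.

Lemma anc_path x y : fconnect par x y ->
  exists p, [/\ path (tadj root par) x p, last x p = y, uniq (x :: p) &
    forall t, (t \in x :: p) = fconnect par x t && fconnect par t y].
Proof.
have path0 z : exists p, [/\ path (tadj root par) z p, last z p = z,
    uniq (z :: p) & forall t, (t \in z :: p) = fconnect par z t && fconnect par t z].
  exists [::]; split=> // t; rewrite inE.
  by apply/eqP/andP => [-> | [zt tz]]; [rewrite connect0 | apply: anc_antisym].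
move=> /iter_findex; move: (findex _ _ _) => n.
elim: n x => [|n IHn] x xy; have [<- // | neq_xy] := eqVneq x y.
  by rewrite -xy /= eqxx in neq_xy.
have px : par x != x.
  by apply: contra_neq neq_xy => fx; rewrite -xy iter_fix.
have xr : x != root by apply: contraNneq px => ->; rewrite tree.1.
rewrite iterSr in xy; have [p [pp lp up memp]] := IHn _ xy.
exists (par x :: p); split=> //.
- by rewrite /= pp andbT /tadj xr eqxx.
- rewrite cons_uniq up andbT memp; apply/negP => /andP [pxx _].
  by rewrite -(anc_antisym (fconnect1 par x) pxx) eqxx in px.
- move=> t; rewrite in_cons memp (fconnect_eqVf par x t).
  have [-> | //] := eqVneq t x.
  by rewrite /= -xy -iterSr fconnect_iter.
Qed.

End RootedTree.

Section BagSubtrees.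
Variables (N : finType) (root : N) (par : N -> N) (V : finType) (bag : N -> {set V}).

Definition bag_adj (a : V) : rel N :=
  [rel u w | [&& tadj root par u w, a \in bag u & a \in bag w]].

Lemma tadj_leave_subtree m u w : tadj root par u w ->
  fconnect par u m -> ~~ fconnect par w m -> [/\ u = m, m != root & w = par m].
Proof.
case/orP => [/andP [ur /eqP <-] | /andP [_ /eqP <-]] um wm.
  by move: um; rewrite fconnect_eqVf (negPf wm) orbF => /eqP <-.
by rewrite (connect_trans (fconnect1 par w) um) in wm.
Qed.

Lemma bag_leave_subtree a m d t : connect (bag_adj a) d t ->
  fconnect par d m -> ~~ fconnect par t m -> [/\ m != root, a \in bag m & a \in bag (par m)].
Proof.
case/connectP => p + -> {t}; elim: p d => [|u p IHp] d /=; first by move=> _ ->.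
case/andP => /and3P [du ad au] pu dm ptm.
have [um | um] := boolP (fconnect par u m); first exact: IHp pu um ptm.
by have [<- dr ud] := tadj_leave_subtree du dm um; rewrite dr ad -ud au.
Qed.

Lemma mem_Fake e (W : {set V}) t w : w \in W ->
  (w \in Fake par bag e W t) = (w \notin bag t) &&
    [exists s in bag t :&: ~: W,
       (w \in nbhd e s) && [exists d, fconnect par d t && (w \in bag d)]].
Proof.
move=> wW; rewrite /Fake /derived_bag !inE wW andbT andbC.
case: (w \in bag t); rewrite //= andbT.
apply/bigcupP/existsP => [[s sS] | [s /and3P [sS ws]]].
  rewrite inE => /andP [ws /bigcupP [d dt wd]].
  by exists s; rewrite sS ws; apply/existsP; exists d; apply/andP.
case/existsP => d /andP [dt wd]; exists s; rewrite // inE ws.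
by apply/bigcupP; exists d.
Qed.

Lemma forget_childP t a u : is_forget root par bag t a -> u \in children root par t ->
  [/\ u != root, par u = t, a \in bag u & a \notin bag t].
Proof.
case=> u' [cht au' ->] ut; have := ut; rewrite cht inE => /eqP eq_uu'.
by move: ut; rewrite inE eq_uu' setD11 => /andP [-> /eqP ->].
Qed.

Hypothesis tree : rooted_tree root par.
Hypothesis bag_connected :
  forall a t1 t2, a \in bag t1 -> a \in bag t2 -> connect (bag_adj a) t1 t2.

Lemma bag_anc_convex a d m t : a \in bag d -> a \in bag t ->
  fconnect par d m -> fconnect par m t -> a \in bag m.
Proof.
move=> ad at_ dm mt; have [<- // | neq_tm] := eqVneq t m.
have tm : ~~ fconnect par t m.
  by apply: contraNN neq_tm => tm; rewrite (anc_antisym tree tm mt).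
by have [] := bag_leave_subtree (bag_connected ad at_) dm tm.
Qed.

Lemma anc_of_bag_forgotten a u t : a \in bag u -> a \notin bag (par u) ->
  a \in bag t -> fconnect par t u.
Proof.
move=> au apu at_; apply: contraNT apu => tu.
by have [] := bag_leave_subtree (bag_connected au at_) (connect0 _ _) tu.
Qed.

End BagSubtrees.

Section FakeVertices.
Variables (N : finType) (root : N) (par : N -> N) (V : finType) (bag : N -> {set V}).
Hypothesis tree : rooted_tree root par.
Hypothesis bag_connected :
  forall a t1 t2, a \in bag t1 -> a \in bag t2 -> connect (bag_adj root par bag a) t1 t2.

Variables (e : rel V) (W : {set V}) (v s : V) (u x y te : N).
Hypotheses (vW : v \in W) (sS : s \in ~: W) (vs : v \in nbhd e s).
Hypotheses (s_te : s \in bag te) (v_te : v \in bag te).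
Hypotheses (ur : u != root) (par_u : par u = x) (v_u : v \in bag u) (v_x : v \notin bag x).
Hypotheses (s_y : s \in bag y) (s_py : s \notin bag (par y)).

Lemma Fake_in_bag_between t :
  (v \in Fake par bag e W t) && (s \in bag t) = fconnect par x t && fconnect par t y.
Proof.
have below_u t' : v \in bag t' -> fconnect par t' u.
  by move=> vt; apply: (anc_of_bag_forgotten bag_connected v_u _ vt); rewrite par_u.
have below_y t' : s \in bag t' -> fconnect par t' y.
  exact: (anc_of_bag_forgotten bag_connected s_y s_py).
have te_x : fconnect par te x.
  by rewrite -par_u (connect_trans (below_u _ v_te) (fconnect1 par u)).
rewrite mem_Fake //; apply/idP/idP.
- case/andP => /andP [vt /exists_inP [_ _ /andP [_ /existsP [d /andP [dt vd]]]]] st.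
  rewrite below_y // andbT.
  case/orP: (fconnect_comparable dt (below_u _ vd)) => [tu | ut].
    by rewrite (bag_anc_convex tree bag_connected vd v_u dt tu) in vt.
  move: ut; rewrite fconnect_eqVf par_u => /orP [/eqP ut | //].
  by rewrite -ut v_u in vt.
- case/andP => xt ty; have te_t := connect_trans te_x xt.
  have st : s \in bag t := bag_anc_convex tree bag_connected s_te s_y te_t ty.
  have vt : v \notin bag t.
    apply: contra ur => vt; have xu := connect_trans xt (below_u _ vt).
    apply/eqP/(par_fixed_root tree); rewrite par_u.
    by apply: (anc_antisym tree xu); rewrite -par_u fconnect1.
  rewrite vt st /= andbT; apply/exists_inP; exists s; first by rewrite inE st sS.
  by rewrite vs; apply/existsP; exists te; rewrite te_t.
Qed.

End FakeVertices.

Theorem lemma11 (VB : finType) (eB eG : rel VB) (W : {set VB})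
  (NT : finType) (r : NT) (par : NT -> NT) (bag : NT -> {set VB})
  (v s : VB) (x fs y : NT) :
  map_graph_with eB W eG ->
  nice_tree_decomposition r par bag eB ->
  v \in W -> s \in ~: W -> v \in nbhd eB s ->
  [set t | (v \in Fake par bag eB W t) && (s \in bag t)] != set0 ->
  is_forget r par bag x v ->
  is_forget r par bag fs s ->
  y \in children r par fs ->
  anc par y x /\
  exists p : seq NT,
    [/\ path (tadj r par) x p, last x p = y, uniq (x :: p) &
        [set t | (v \in Fake par bag eB W t) && (s \in bag t)]
          = [set t in x :: p]].
Proof.
move=> _ [[tree _ edge_in_bag bag_connected] _ _] vW sS vs Q_n0 forget_x forget_fs y_fs.
have [u [cx _ _]] := forget_x.
have u_x : u \in children r par x by rewrite cx set11.
have [ur par_u v_u v_x] := forget_childP forget_x u_x.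
have [_ par_y s_y s_fs] := forget_childP forget_fs y_fs.
have [te /andP [s_te v_te]] : exists te, (s \in bag te) && (v \in bag te).
  by apply: edge_in_bag; rewrite inE in vs.
have s_py : s \notin bag (par y) by rewrite par_y.
have QE := Fake_in_bag_between tree bag_connected vW sS vs s_te v_te ur par_u v_u v_x s_y s_py.
have xy : fconnect par x y.
  by case/set0Pn: Q_n0 => t; rewrite in_set QE => /andP [xt ty]; apply: connect_trans xt ty.
split=> //; have [p [xp lp up memp]] := anc_path tree xy.
by exists p; split=> //; apply/setP => t; rewrite [LHS]in_set [RHS]in_set QE memp.
Qed.
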